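(* For any closed $k$-subspace $W\subset k[z_1^{-1}]((z_2))$ with $\mathrm{Supp}(W)=W_0:=k[z_1^{-1},z_2^{-1}]$ there exists a unique operator $S=1+S^-$ with $S^-\in\hat D_1[[\partial_2^{-1}]]\partial_2^{-1}$ such that $W_0S=W$.
   Context: $k$ is a field of characteristic zero, $R=k[[x_1,x_2]]$, $M=(x_1,x_2)$, $\mathrm{ord}_M(a)=\sup\{n:a\in M^n\}$, $\partial_i=\partial/\partial x_i$. $\hat D_1$ is the ring of formal series $\sum_{q\ge0}a_q\partial_1^q$, $a_q\in R$, with $\mathrm{ord}_M(a_q)\to\infty$ as $q\to\infty$ (multiplication by the Leibniz rule). $\hat E_+=\hat D_1((\partial_2^{-1}))$ is the ring of formal Laurent series in $\partial_2^{-1}$ with coefficients in $\hat D_1$ written on the left, multiplied by the Leibniz rule $\partial_2^{n}a=\sum_{j\ge0}\binom{n}{j}\partial_2^j(a)\partial_2^{n-j}$ ($n\in\mathbb Z$); $\hat D_1[[\partial_2^{-1}]]\partial_2^{-1}\subset\hat E_+$. The space $k[z_1^{-1}]((z_2))$ is a right $\hat E_+$-module via $\hat E_+/(x_1\hat E_++x_2\hat E_+)\simeq k[z_1^{-1}]((z_2))$, the class of $p\,\partial_1^i\partial_2^j$ ($p\in R$) corresponding to $p(0,0)z_1^{-i}z_2^{-j}$. On $\mathbb Z^2$ use the anti-lexicographic order: $(a,b)<(c,d)$ iff $b<d$, or $b=d$ and $a<c$. For $0\ne v=\sum v_{ij}z_1^iz_2^j$, its lowest term $\mathrm{LT}(v)$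 is the term $v_{ij}z_1^iz_2^j$, $v_{ij}\ne0$, with minimal $(i,j)$. The support $\mathrm{Supp}(W)$ of a subspace $W$ is the closed subspace (in the two-dimensional local field topology of $k((z_1))((z_2))$) generated by $\mathrm{LT}(a)$, $0\neq a\in W$; thus $\mathrm{Supp}(W)=W_0$ means the exponents of lowest terms of nonzero elements of $W$ are exactly the pairs $(-i,-j)$, $i,j\ge0$. *)

From HB Require Import structures.
From mathcomp Require Import all_boot all_order all_algebra.
Set Implicit Arguments. Unset Strict Implicit. Unset Printing Implicit Defensive.
Import Order.TTheory GRing.Theory Num.Theory.
Local Open Scope ring_scope.

(* Elements of V = k[z1^-1]((z2)) are coefficient functions
   f : nat -> int -> k,  f a b = coefficient of  z1^(-a) z2^b.            *)
Definition inV (k : fieldType) (f : nat -> int -> k) : Prop :=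
  (exists b0 : int, forall a (b : int), b < b0 -> f a b = 0) /\
  (forall b : int, exists A : nat, forall a : nat, (A <= a)%N -> f a b = 0).

(* Closed k-subspace of V (topology induced from the two-dimensional local
   field k((z1))((z2))): a basic neighbourhood of 0 is given by b0 : int and
   bounds A : int -> nat, and consists of the g with g a b = 0 whenever
   b < b0 and a >= A b  (i.e. the z2^b-coefficient lies in z1^{1-A b} k[[z1]]). *)
Definition closed_subspace (k : fieldType) (W : (nat -> int -> k) -> Prop) : Prop :=
  (forall f, W f -> inV f) /\
  W (fun _ _ => 0) /\
  (forall f g, W f -> W g -> W (fun a b => f a b + g a b)) /\
  (forall (c : k) f, W f -> W (fun a b => c * f a b)) /\
  (forall f, inV f ->
     (forall (b0 : int) (A : int -> nat), exists w, W w /\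
        forall (b : int), b < b0 -> forall a : nat, (A b <= a)%N -> f a b = w a b) ->
     W f).

(* Lowest term (anti-lexicographic order on exponents (-a, b)):
   v has lowest term  v a b z1^(-a) z2^b. *)
Definition lowest_term_at (k : fieldType) (v : nat -> int -> k) (a : nat) (b : int) : Prop :=
  v a b != 0 /\
  (forall (b' : int) (a' : nat), b' < b -> v a' b' = 0) /\
  (forall a' : nat, (a < a')%N -> v a' b = 0).

(* Supp(W) = W0 = k[z1^-1, z2^-1]: the exponents of lowest terms of nonzero
   elements of W are exactly the pairs (-i,-j), i,j >= 0. *)
Definition supp_is_W0 (k : fieldType) (W : (nat -> int -> k) -> Prop) : Prop :=
  (forall w, W w -> forall (a : nat) (b : int), lowest_term_at w a b -> b <= 0) /\
  (forall i j : nat, exists w, W w /\ lowest_term_at w i (- (j%:Z))).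

(* Elements of \hat D_1: d q i j = coefficient of x1^i x2^j in a_q, where the
   element is sum_q a_q d_1^q; condition ord_M(a_q) -> oo.                 *)
Definition inD1 (k : fieldType) (d : nat -> nat -> nat -> k) : Prop :=
  forall N : nat, exists Q : nat, forall q : nat, (Q <= q)%N ->
    forall i j : nat, (i + j < N)%N -> d q i j = 0.

(* Operators S = 1 + S^- in \hat E_+, S^- in \hat D_1[[d_2^-1]] d_2^-1:
   s m q i j = coefficient of x1^i x2^j d_1^q d_2^(-m). *)
Definition isS (k : fieldType) (s : nat -> nat -> nat -> nat -> k) : Prop :=
  (forall q i j : nat, s 0%N q i j = if [&& q == 0%N, i == 0%N & j == 0%N] then 1 else 0) /\
  (forall m : nat, (0 < m)%N -> inD1 (s m)).

(* Coefficient of z1^(-a) z2^b in  (z1^(-i) z2^(-j)) . S, computed in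
   \hat E_+ / (x1 \hat E_+ + x2 \hat E_+):
   d1^i d2^j (p d1^q d2^(-m)) = sum_{al<=i, be<=j} C(i,al) C(j,be)
        (d1^al d2^be p) d1^(i-al+q) d2^(j-be-m),
   whose class is sum C(i,al)C(j,be) al! be! p_{al,be} z1^(-(i-al+q)) z2^(m+be-j). *)
Definition monact (k : fieldType) (s : nat -> nat -> nat -> nat -> k)
  (i j a : nat) (b : int) : k :=
  \sum_(al < i.+1) \sum_(be < j.+1)
    (if (i <= a + al)%N then
       (let e := b + j%:Z - be%:Z in
        if 0 <= e then
          'C(i, al)%:R * 'C(j, be)%:R * (al`!)%:R * (be`!)%:R *
            s (absz e) (a + al - i)%N al be
        else 0)
     else 0).

Definition inW0S (k : fieldType) (s : nat -> nat -> nat -> nat -> k)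
  (f : nat -> int -> k) : Prop :=
  exists (N : nat) (c : nat -> nat -> k), forall (a : nat) (b : int),
    f a b = \sum_(i < N) \sum_(j < N) c i j * monact s i j a b.

From HB Require Import structures.
From mathcomp Require Import all_boot all_order all_algebra.
From mathcomp Require Import zify.
From Stdlib Require Import Classical FunctionalExtensionality ClassicalEpsilon.
Set Implicit Arguments. Unset Strict Implicit.
Import Order.TTheory GRing.Theory Num.Theory.
Local Open Scope ring_scope.

(* Write v.S for the right action of S on V = k[z1^-1]((z2)); 'monact s i j'
   is (z1^-i z2^-j).S, and W0 S consists of the finite combinations of these.
   The proof rests on three facts.
   (1) Reduction (Series, Subspace): if u i j in V has lowest term
       z1^-i z2^-j, then every v in V agrees on its part of z2-degree <= 0
       (which has finitely many terms) with a finite combination of the u i j.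
       An element of W whose part of z2-degree <= 0 vanishes is zero, since its
       lowest term would have positive z2-degree.  So W is the graph of a
       completion map cw sending such a part to the unique element of W above it.
   (2) Triangularity (Operators): (z1^-i z2^-j).S has lowest term z1^-i z2^-j,
       and its coefficient at z1^-q z2^m, m > 0, is i! j! times the coefficient
       of x1^i x2^j d1^q d2^-m in S plus terms involving only coefficients of S
       of lower x-degree.
   (3) Consequently W0 S = W iff every (z1^-i z2^-j).S lies in W (W0S_eq_W),
       and this condition determines S degree by degree, dividing by i! j!
       (characteristic 0): the truncations 'truncS n' build S from cw, and
       'S_unique' shows S is forced. *)

Definition eventually (P : nat -> Prop) : Prop :=
  exists Q : nat, forall q : nat, (Q <= q)%N -> P q.

Lemma eventually_all_lt (P : nat -> nat -> Prop) (N : nat) :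
  (forall x, (x < N)%N -> eventually (P x)) ->
  eventually (fun q => forall x, (x < N)%N -> P x q).
Proof.
elim: N => [|N IH] evP; first by exists 0%N.
have [Q0 H0] := IH (fun x hx => evP x (ltnW hx)).
have [Q1 H1] := evP N (ltnSn N).
exists (maxn Q0 Q1) => q; rewrite geq_max => /andP[q0 q1] x.
by rewrite ltnS leq_eqVlt => /orP[/eqP -> | hx]; [exact: H1 | exact: H0].
Qed.

Lemma sum2_single (R : nmodType) (n m i0 j0 : nat) (F : nat -> nat -> R) :
  (i0 < n)%N -> (j0 < m)%N ->
  (forall i j, (i < n)%N -> (j < m)%N -> (i != i0) || (j != j0) -> F i j = 0) ->
  \sum_(i < n) \sum_(j < m) F i j = F i0 j0.
Proof.
move=> hi0 hj0 F0.
rewrite (bigD1 (Ordinal hi0)) //= [X in _ + X]big1 ?addr0; last first.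
  move=> i; rewrite -val_eqE /= => hi; rewrite big1 // => j _.
  by apply: F0; rewrite ?ltn_ord ?hi.
rewrite (bigD1 (Ordinal hj0)) //= big1 ?addr0 // => j.
by rewrite -val_eqE /= => hj; apply: F0; rewrite ?ltn_ord ?hj ?orbT.
Qed.

Lemma sum2_widen (R : nmodType) (N N' : nat) (F : nat -> nat -> R) : (N <= N')%N ->
  \sum_(i < N) \sum_(j < N) F i j =
  \sum_(i < N') \sum_(j < N') (if (i < N)%N && (j < N)%N then F i j else 0).
Proof.
move=> hN; rewrite (big_ord_widen N' (fun i => \sum_(j < N) F i j) hN) big_mkcond /=.
apply: eq_bigr => i _; case: ifP => hi /=; last by rewrite big1.
rewrite (big_ord_widen N' (F i) hN) big_mkcond /=.
by apply: eq_bigr => j _.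
Qed.

Lemma least_int (P : int -> Prop) (b0 b1 : int) :
  (forall b, b < b0 -> ~ P b) -> P b1 -> exists b, P b /\ forall b', b' < b -> ~ P b'.
Proof.
move=> below Pb1; apply: NNPP => none.
suff H : forall n : nat, forall b, b < b0 + n%:Z -> ~ P b.
  by apply: (H (absz (b1 - b0)).+1 b1) => //; lia.
elim=> [|n IH] b hb Pb; first by apply: (below b) => //; lia.
by apply: none; exists b; split => // b' hb'; apply: IH; lia.
Qed.

Section Series.
Variable k : fieldType.
Local Notation series := (nat -> int -> k).

Lemma series_ext (f g : series) : (forall a b, f a b = g a b) -> f = g.
Proof. by move=> fg; do 2 apply: functional_extensionality => ?; apply: fg. Qed.

Lemma inV_lin (f g : series) (c : k) :
  inV f -> inV g -> inV (fun a b => f a b + c * g a b).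
Proof.
move=> [[b1 f_low] f_fin] [[b2 g_low] g_fin]; split.
  exists (Order.min b1 b2) => a b; rewrite lt_min => /andP[h1 h2].
  by rewrite f_low // g_low // mulr0 addr0.
move=> b; have [A1 HA1] := f_fin b; have [A2 HA2] := g_fin b.
exists (maxn A1 A2) => a; rewrite geq_max => /andP[h1 h2].
by rewrite HA1 // HA2 // mulr0 addr0.
Qed.

Lemma lowest_term_exists (v : series) (a1 : nat) (b1 : int) :
  inV v -> v a1 b1 != 0 -> exists a b, lowest_term_at v a b.
Proof.
move=> [[b0 v_low] v_fin] nz.
have [b [[a0 nz0] empty_below]] :
    exists b, (exists a, v a b != 0) /\ forall b', b' < b -> ~ exists a, v a b' != 0.
  apply: (least_int (b0 := b0) (b1 := b1)); last by exists a1.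
  by move=> b hb [a]; rewrite v_low ?eqxx.
have [A HA] := v_fin b.
have bounded : forall a, v a b != 0 -> (a <= A)%N.
  by move=> a; apply: contraR; rewrite -ltnNge => /ltnW /HA ->; rewrite eqxx.
have [am nzm maxm] := ex_maxnP (ex_intro (fun a => v a b != 0) a0 nz0) bounded.
exists am, b; split => //; split.
  move=> b' a' lt; apply/eqP/negPn/negP => nz'.
  by apply: (empty_below b' lt); exists a'.
by move=> a' lt; apply/eqP; apply: contraTT lt => /maxm; rewrite -leqNgt.
Qed.

Definition agree_nonpos (f g : series) : Prop :=
  forall (a : nat) (b : int), b <= 0 -> f a b = g a b.

Inductive span (u : nat -> nat -> series) : series -> Prop :=
| span0 : span u (fun _ _ => 0)
| spanS g c i j : span u g -> span u (fun a b => g a b + c * u i j a b).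

Lemma span_add u (g h : series) :
  span u g -> span u h -> span u (fun a b => g a b + h a b).
Proof.
move=> sg; elim=> [|h' c i j _ IH].
  by rewrite (_ : (fun a b => _) = g) //; apply: series_ext => a b; rewrite addr0.
rewrite (_ : (fun a b => _) = (fun a b => (g a b + h' a b) + c * u i j a b)).
  exact: spanS.
by apply: series_ext => a b; rewrite addrA.
Qed.

Lemma span_inV u (g : series) :
  (forall i j, inV (u i j)) -> span u g -> inV g.
Proof.
move=> Vu; elim=> [|h c i j _ Vh]; last exact: inV_lin.
by split; [exists 0 | move=> b; exists 0%N].
Qed.

Lemma span_sum u (g : series) : span u g -> exists N (c : nat -> nat -> k),
  forall a b, g a b = \sum_(i < N) \sum_(j < N) c i j * u i j a b.
Proof.
elim=> [|g' c i j _ [N [c0 g_sum]]].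
  by exists 0%N, (fun _ _ => 0) => a b; rewrite big_ord0.
set N' := (maxn N (maxn i j)).+1.
have hN : (N <= N')%N by rewrite ltnW // ltnS leq_maxl.
have hi : (i < N')%N by rewrite ltnS (leq_trans (leq_maxl i j)) ?leq_maxr.
have hj : (j < N')%N by rewrite ltnS (leq_trans (leq_maxr i j)) ?leq_maxr.
exists N', (fun x y => (if (x < N)%N && (y < N)%N then c0 x y else 0) +
                     (if (x == i) && (y == j) then c else 0)) => a b.
under eq_bigr => x _ do under eq_bigr => y _ do rewrite mulrDl.
under eq_bigr => x _ do rewrite big_split /=.
rewrite big_split /= g_sum (sum2_widen (fun x y => c0 x y * u x y a b) hN).
congr (_ + _).
  apply: eq_bigr => x _; apply: eq_bigr => y _; by case: ifP; rewrite ?mul0r.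
rewrite (sum2_single (F := fun x y => (if (x == i) && (y == j) then c else 0) * u x y a b) hi hj).
  by rewrite !eqxx.
by move=> x y _ _; rewrite -negb_and => /negbTE ->; rewrite mul0r.
Qed.

Section Reduction.
Variable u : nat -> nat -> series.
Hypothesis u_inV : forall i j, inV (u i j).
Hypothesis u_lowest : forall i j, lowest_term_at (u i j) i (- (j%:Z)).

(* Clearing the level z2^-j: subtracting multiples of u A j, u (A-1) j, ...
   kills the coefficients of z1^-a z2^-j from the largest a downwards, without
   touching the lower levels. *)
Lemma reduce_level (j A : nat) (v : series) :
  (forall a (b : int), b < - (j%:Z) -> v a b = 0) ->
  (forall a, (A <= a)%N -> v a (- (j%:Z)) = 0) ->
  exists g, span u g /\ forall a (b : int), b <= - (j%:Z) -> v a b = g a b.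
Proof.
elim: A v => [|A IH] v below level.
  exists (fun _ _ => 0); split; first exact: span0.
  move=> a b; rewrite le_eqVlt => /orP[/eqP -> | lt]; [exact: level | exact: below].
have [nzA [belowA levelA]] := u_lowest A j.
set c := v A (- (j%:Z)) / u A j A (- (j%:Z)).
pose v' := fun a b => v a b + - c * u A j a b.
have below' : forall a (b : int), b < - (j%:Z) -> v' a b = 0.
  by move=> a b lt; rewrite /v' below // belowA // mulr0 addr0.
have level' : forall a, (A <= a)%N -> v' a (- (j%:Z)) = 0.
  move=> a; rewrite /v' leq_eqVlt => /orP[/eqP <- | lt].
    by rewrite /c mulNr divfK // subrr.
  by rewrite level // levelA // mulr0 addr0.
have [g [sg vg]] := IH v' below' level'.
exists (fun a b => g a b + c * u A j a b); split; first exact: spanS.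
by move=> a b hb; rewrite -vg // /v' mulNr subrK.
Qed.

Lemma reduce_to_span (v : series) :
  inV v -> exists g, span u g /\ agree_nonpos v g.
Proof.
suff H : forall (n : nat) v, inV v -> (forall a (b : int), b < - (n%:Z) -> v a b = 0) ->
    exists g, span u g /\ agree_nonpos v g.
  move=> Vv; have [[b0 v_low] _] := Vv.
  by apply: (H (absz b0)) => // a b lt; apply: v_low; lia.
elim=> [|n IH] {}v Vv below.
  have [A HA] := Vv.2 0.
  have [g [sg vg]] := reduce_level (j := 0) below HA.
  by exists g.
have [A HA] := Vv.2 (- (n.+1%:Z)).
have [g1 [sg1 vg1]] := reduce_level below HA.
pose v' := fun a b => v a b + -1 * g1 a b.
have below' : forall a (b : int), b < - (n%:Z) -> v' a b = 0.
  by move=> a b lt; rewrite /v' vg1 ?mulN1r ?subrr //; lia.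
have [g2 [sg2 vg2]] := IH v' (inV_lin _ Vv (span_inV u_inV sg1)) below'.
exists (fun a b => g1 a b + g2 a b); split; first exact: span_add.
by move=> a b hb; rewrite -vg2 // /v' mulN1r addrC subrK.
Qed.

End Reduction.
End Series.

Section Subspace.
Variables (k : fieldType) (W : (nat -> int -> k) -> Prop).
Local Notation series := (nat -> int -> k).
Hypothesis W_closed : closed_subspace W.
Hypothesis W_supp : supp_is_W0 W.

Lemma W_inV (f : series) : W f -> inV f.
Proof. by case: W_closed => Vw _; apply: Vw. Qed.

Lemma W_lin (f g : series) (c : k) : W f -> W g -> W (fun a b => f a b + c * g a b).
Proof. by case: W_closed => _ [_ [W_add [W_scale _]]] Wf Wg; apply/W_add/W_scale. Qed.

Lemma W_sum (n : nat) (F : 'I_n -> series) :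
  (forall i, W (F i)) -> W (fun a b => \sum_(i < n) F i a b).
Proof.
elim: n F => [|n IH] F WF.
  rewrite (_ : (fun a b => _) = fun _ _ => 0); first by case: W_closed => _ [].
  by apply: series_ext => a b; rewrite big_ord0.
rewrite (_ : (fun a b => _) =
  fun a b => \sum_(i < n) F (widen_ord (leqnSn n) i) a b + 1 * F ord_max a b).
  by apply: W_lin => //; apply: IH.
by apply: series_ext => a b; rewrite big_ord_recr mul1r.
Qed.

Lemma W_span u (g : series) : (forall i j, W (u i j)) -> span u g -> W g.
Proof.
move=> Wu; elim=> [|h c i j _ Wh]; last exact: W_lin.
by case: W_closed => _ [].
Qed.

Lemma W_eq_of_agree (f g : series) : W f -> W g -> agree_nonpos f g -> f = g.
Proof.
move=> Wf Wg fg; apply: series_ext => a b; apply/eqP; rewrite -subr_eq0.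
apply/negPn/negP => nz.
have Wd := W_lin (-1) Wf Wg.
have nzd : f a b + -1 * g a b != 0 by rewrite mulN1r.
have [a' [b' low]] := lowest_term_exists (W_inV Wd) nzd.
have b'_le0 := W_supp.1 _ Wd _ _ low.
by case: low; rewrite fg // mulN1r subrr eqxx.
Qed.

(* Choose elements of W with every
   lowest term z1^-i z2^-j; the reduction then provides the completion. *)
Lemma completion_exists : exists cw : series -> series,
  forall v, inV v -> W (cw v) /\ agree_nonpos v (cw v).
Proof.
have [u0 u0_spec] := choice (fun (ij : nat * nat) w => W w /\ lowest_term_at w ij.1 (- (ij.2%:Z)))
  (fun ij => W_supp.2 ij.1 ij.2).
pose u i j := u0 (i, j).
have Wu : forall i j, W (u i j) by move=> i j; case: (u0_spec (i, j)).
have lowest_u : forall i j, lowest_term_at (u i j) i (- (j%:Z)).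
  by move=> i j; case: (u0_spec (i, j)).
apply: (choice (fun v w => inV v -> W w /\ agree_nonpos v w)) => v.
case: (classic (inV v)) => [Vv | nVv]; last by exists v.
have [g [sg vg]] := reduce_to_span (fun i j => W_inV (Wu i j)) lowest_u Vv.
by exists g => _; split => //; apply: W_span sg.
Qed.

End Subspace.

Section Operators.
Variable k : fieldType.
Local Notation operator := (nat -> nat -> nat -> nat -> k).

Definition oneD1 (q i j : nat) : k :=
  if [&& q == 0%N, i == 0%N & j == 0%N] then 1 else 0.

Definition monact_term (s : operator) (i j a : nat) (b : int) (al be : nat) : k :=
  if (i <= a + al)%N then
    (let e := b + j%:Z - be%:Z in
     if 0 <= e then
       'C(i, al)%:R * 'C(j, be)%:R * (al`!)%:R * (be`!)%:R * s (absz e) (a + al - i)%N al be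
     else 0)
  else 0.

Lemma monactE (s : operator) i j a b :
  monact s i j a b = \sum_(al < i.+1) \sum_(be < j.+1) monact_term s i j a b al be.
Proof. by []. Qed.

Lemma monact_ext (s s' : operator) i j a b :
  (forall m q al be, (al <= i)%N -> (be <= j)%N -> s m q al be = s' m q al be) ->
  monact s i j a b = monact s' i j a b.
Proof.
move=> ss'; rewrite !monactE; apply: eq_bigr => al _; apply: eq_bigr => be _.
by rewrite /monact_term ss' // -ltnS.
Qed.

Definition drop_top (s : operator) (i j : nat) : operator :=
  fun m q al be => if [&& m != 0%N, al == i & be == j] then 0 else s m q al be.

Lemma monact_drop_top (s : operator) i j a b :
  monact s i j a b = monact (drop_top s i j) i j a b +
     (if 0 < b then (i`! * j`!)%:R * s (absz b) a i j else 0).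
Proof.
apply/eqP; rewrite addrC -subr_eq !monactE -sumrB.
under eq_bigr => al _ do rewrite -sumrB.
rewrite (sum2_single (i0 := i) (j0 := j)
  (F := fun al be => monact_term s i j a b al be - monact_term (drop_top s i j) i j a b al be)) //.
  rewrite /monact_term /drop_top leq_addl addnK addrK !binn !eqxx !andbT !mul1r.
  case: (ltrgtP b 0) => [hb | hb | ->]; rewrite ?subrr ?ltxx //.
  have b_nz : (absz b != 0)%N by apply/eqP; lia.
  by rewrite b_nz mulr0 subr0 natrM.
move=> al be _ _ neq; rewrite /monact_term /drop_top.
by move: neq; rewrite -negb_and => /negbTE ->; rewrite andbF subrr.
Qed.

(* Below z2^-j the action only sees the constant part 1 of S. *)
Lemma monact_low (s : operator) i j a (b : int) :
  (forall q al be, s 0%N q al be = oneD1 q al be) -> b <= - (j%:Z) ->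
  monact s i j a b = if (b == - (j%:Z)) && (a == i) then 1 else 0.
Proof.
move=> s0 hb; rewrite monactE (sum2_single (i0 := 0%N) (j0 := 0%N)
  (F := fun al be => monact_term s i j a b al be)) //.
  rewrite /monact_term addn0 subr0 !bin0 !fact0 !mul1r.
  case: (boolP (b == - (j%:Z))) => [/eqP -> | hbj]; last first.
    by case: ifP => // _; rewrite ifF //; lia.
  rewrite addNr lexx /= s0 /oneD1 !andbT.
  case: (boolP (a == i)) => [/eqP -> | hai]; first by rewrite leqnn subnn.
  by case: ifP => // hia; rewrite ifF //; apply/negbTE; lia.
move=> al be _ _ neq; rewrite /monact_term; case: ifP => // _.
case: ifP => // he; have [be0 e0] : be = 0%N /\ b + j%:Z - be%:Z = 0 by lia.
rewrite e0 /= s0 /oneD1; move: neq; rewrite be0 eqxx /= orbF => /negbTE ->.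
by rewrite andbF mulr0.
Qed.

Lemma monact_lowest (s : operator) i j :
  (forall q al be, s 0%N q al be = oneD1 q al be) ->
  lowest_term_at (monact s i j) i (- (j%:Z)).
Proof.
move=> s0; split; first by rewrite monact_low // !eqxx oner_eq0.
split; first by move=> b' a' lt; rewrite monact_low ?(ltW lt) // (lt_eqF lt).
by move=> a' lt; rewrite monact_low // eqxx (gtn_eqF lt).
Qed.

Definition d1_finite (s : operator) : Prop :=
  forall m al be, eventually (fun q => s m q al be = 0).

Lemma inD1_of_d1_finite (s : operator) m : d1_finite s -> inD1 (s m).
Proof.
move=> fin N.
have [Q HQ] : eventually (fun q => forall i, (i < N)%N -> forall j, (j < N)%N -> s m q i j = 0).
  by apply: eventually_all_lt => i _; apply: eventually_all_lt => j _; apply: fin.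
by exists Q => q hq i j hij; apply: HQ => //; lia.
Qed.

Lemma monact_inV (s : operator) i j : d1_finite s -> inV (monact s i j).
Proof.
move=> fin; split.
  exists (- (j%:Z)) => a b lt; rewrite monactE big1 // => al _; rewrite big1 // => be _.
  by rewrite /monact_term; case: ifP => // _; case: ifP => // he; lia.
move=> b.
have [Q HQ] : eventually (fun q => forall al, (al < i.+1)%N ->
    forall be, (be < j.+1)%N -> s (absz (b + j%:Z - be%:Z)%R) q al be = 0).
  by apply: eventually_all_lt => al _; apply: eventually_all_lt => be _; apply: fin.
exists (Q + i)%N => a ha; rewrite monactE big1 // => al _; rewrite big1 // => be _.
rewrite /monact_term; case: ifP => // _; case: ifP => // _.
by rewrite HQ ?mulr0 //; lia.
Qed.

Lemma monact_inW0S (s : operator) i j : inW0S s (monact s i j).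
Proof.
exists (maxn i j).+1, (fun x y => if (x == i) && (y == j) then 1 else 0) => a b.
rewrite (sum2_single (i0 := i) (j0 := j)
  (F := fun x y => (if (x == i) && (y == j) then 1 else 0) * monact s x y a b)).
- by rewrite !eqxx mul1r.
- by rewrite ltnS leq_maxl.
- by rewrite ltnS leq_maxr.
by move=> x y _ _; rewrite -negb_and => /negbTE ->; rewrite mul0r.
Qed.

Lemma monact_drop_top_agree (s s' : operator) i j a b :
  (forall m q x y, (x <= i)%N -> (y <= j)%N -> (x + y < i + j)%N -> s m q x y = s' m q x y) ->
  (forall q, s 0%N q i j = s' 0%N q i j) ->
  monact (drop_top s i j) i j a b = monact (drop_top s' i j) i j a b.
Proof.
move=> lower s0; apply: monact_ext => m q x y hx hy; rewrite /drop_top.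
case: (boolP ((x == i) && (y == j))) => [/andP[/eqP -> /eqP ->] | hxy].
  by rewrite !andbT; case: (boolP (m != 0%N)) => //; rewrite negbK => /eqP ->.
by rewrite andbF; apply: lower => //; move: hxy; rewrite negb_and; lia.
Qed.

End Operators.

Lemma fact_prod_neq0 (k : fieldType) (i j : nat) :
  [pchar k] =i pred0 -> ((i`! * j`!)%:R : k) != 0.
Proof. by move=> char0; rewrite ((pcharf0P k).1 char0) -lt0n muln_gt0 !fact_gt0. Qed.

Section Construction.
Variables (k : fieldType) (W : (nat -> int -> k) -> Prop).
Variable cw : (nat -> int -> k) -> (nat -> int -> k).
Local Notation operator := (nat -> nat -> nat -> nat -> k).
Hypothesis char0 : [pchar k] =i pred0.
Hypothesis W_closed : closed_subspace W.
Hypothesis cw_spec : forall v, inV v -> W (cw v) /\ agree_nonpos v (cw v).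

(* Completing the truncation sn (coefficients of x-degree < n) by the layer
   of x-degree n: the top coefficient at d1^q d2^-m is the defect between the
   completion of (z1^-al z2^-be).sn and (z1^-al z2^-be).sn, divided by al! be!. *)
Definition next_layer (sn : operator) (n : nat) : operator := fun m q al be =>
  if m == 0%N then oneD1 k q al be
  else if (al + be < n)%N then sn m q al be
  else if (al + be == n)%N then
    (cw (monact sn al be) q m%:Z - monact sn al be q m%:Z) / (al`! * be`!)%:R
  else 0.

Fixpoint truncS (n : nat) : operator :=
  if n is n'.+1 then next_layer (truncS n') n'
  else fun m q al be => if m == 0%N then oneD1 k q al be else 0.

Definition limS : operator := fun m q al be => truncS (al + be).+1 m q al be.

Lemma truncS_one n q al be : truncS n 0%N q al be = oneD1 k q al be.
Proof. by case: n. Qed.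

Lemma truncS_high n m q al be :
  m != 0%N -> (n <= al + be)%N -> truncS n m q al be = 0.
Proof.
move=> m_nz; elim: n => [|n IH] hn /=; first by rewrite (negbTE m_nz).
by rewrite /next_layer (negbTE m_nz) ltnNge ltnW //= gtn_eqF.
Qed.

Lemma truncS_stable n n' m q al be :
  (al + be < n)%N -> (n <= n')%N -> truncS n' m q al be = truncS n m q al be.
Proof.
move=> lt_n; elim: n' => [|n' IH]; first by rewrite leqn0 => /eqP ->.
rewrite leq_eqVlt => /orP[/eqP -> // | lt_n'].
rewrite /= /next_layer IH //; case: ifP => [/eqP -> | _]; first by rewrite truncS_one.
by rewrite (leq_trans lt_n).
Qed.

Lemma limS_trunc n m q al be :
  (al + be < n)%N -> limS m q al be = truncS n m q al be.
Proof.
move=> lt_n; rewrite /limS; case: (leqP n (al + be).+1) => hn.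
  by rewrite (truncS_stable m q lt_n hn).
by rewrite (truncS_stable m q (ltnSn _) (ltnW hn)).
Qed.

(* Each layer has finite d1-supports, because completions stay in V. *)
Lemma truncS_finite n : d1_finite (truncS n).
Proof.
elim: n => [|n IH] m al be /=.
  exists 1%N => q q_pos; case: ifP => // _.
  by rewrite /oneD1 (gtn_eqF q_pos).
rewrite /next_layer; case: (boolP (m == 0%N)) => _.
  by exists 1%N => q q_pos; rewrite /oneD1 (gtn_eqF q_pos).
case: (boolP (al + be < n)%N) => _; first exact: IH.
case: (boolP (al + be == n)%N) => _; last by exists 0%N.
have VL := monact_inV al be IH.
have VC := W_inV W_closed (cw_spec VL).1.
have [A1 HA1] := VL.2 m%:Z; have [A2 HA2] := VC.2 m%:Z.
exists (maxn A1 A2) => q; rewrite geq_max => /andP[q1 q2].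
by rewrite HA1 // HA2 // subrr mul0r.
Qed.

Lemma truncS_layer i j :
  monact (truncS (i + j).+1) i j = cw (monact (truncS (i + j)) i j).
Proof.
have VL := monact_inV i j (truncS_finite (i + j)).
apply: series_ext => a b; rewrite monact_drop_top.
have -> : monact (drop_top (truncS (i + j).+1) i j) i j a b =
          monact (truncS (i + j)) i j a b.
  rewrite (monact_drop_top_agree (s' := truncS (i + j))); last first.
  - by move=> q; rewrite !truncS_one.
  - by move=> m q x y _ _ lt; rewrite /= /next_layer lt; case: ifP => // /eqP ->;
      rewrite truncS_one.
  apply: monact_ext => m q x y _ _; rewrite /drop_top.
  case: ifP => // /and3P[m_nz /eqP -> /eqP ->].
  by rewrite truncS_high.
case: ifP => b_pos; last by rewrite addr0 (cw_spec VL).2 // leNgt b_pos.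
rewrite /= /next_layer ifF; last by apply/negbTE/eqP; lia.
rewrite ltnn eqxx (_ : (absz b)%:Z = b); last by lia.
by rewrite mulrC divfK ?fact_prod_neq0 // addrC subrK.
Qed.

Lemma limS_monact_W i j : W (monact limS i j).
Proof.
have VL := monact_inV i j (truncS_finite (i + j)).
rewrite (_ : monact limS i j = cw (monact (truncS (i + j)) i j)); first exact: (cw_spec VL).1.
rewrite -truncS_layer; apply: series_ext => a b.
by apply: monact_ext => m q x y hx hy; apply: limS_trunc; rewrite ltnS leq_add.
Qed.

Lemma limS_isS : isS limS.
Proof.
split; first by move=> q al be; rewrite /limS truncS_one.
move=> m _; apply: inD1_of_d1_finite => {}m al be.
exact: truncS_finite (al + be).+1 m al be.
Qed.

End Construction.

Section Characterization.
Variables (k : fieldType) (W : (nat -> int -> k) -> Prop).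
Local Notation operator := (nat -> nat -> nat -> nat -> k).
Hypothesis W_closed : closed_subspace W.
Hypothesis W_supp : supp_is_W0 W.

Lemma W0S_eq_W (s : operator) :
  (forall q al be, s 0%N q al be = oneD1 k q al be) ->
  (forall i j, W (monact s i j)) ->
  forall f, inW0S s f <-> W f.
Proof.
move=> s0 W_monact f; split.
  move=> [N [c f_sum]]; rewrite (series_ext f_sum).
  apply: W_sum => // i; apply: W_sum => // j.
  rewrite (_ : (fun a b => _) = fun a b => 0 + c i j * monact s i j a b).
    by apply: W_lin => //; case: W_closed => _ [].
  by apply: series_ext => a b; rewrite add0r.
move=> Wf.
have [g [sg fg]] := reduce_to_span (fun i j => W_inV W_closed (W_monact i j))
  (fun i j => monact_lowest i j s0) (W_inV W_closed Wf).
have -> := W_eq_of_agree W_closed W_supp Wf (W_span W_closed W_monact sg) fg.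
exact: span_sum sg.
Qed.

(* Uniqueness, by induction on the x-degree al + be: if S and S' agree in
   lower degree, (z1^-al z2^-be).S' - (z1^-al z2^-be).S lies in W and vanishes
   in z2-degrees <= 0, hence is zero; its z2^m-part is al! be! times the
   difference of the coefficients of x1^al x2^be d2^-m. *)
Lemma S_unique (s s' : operator) :
  [pchar k] =i pred0 ->
  (forall q al be, s 0%N q al be = oneD1 k q al be) -> (forall i j, W (monact s i j)) ->
  (forall q al be, s' 0%N q al be = oneD1 k q al be) -> (forall i j, W (monact s' i j)) ->
  forall m q al be, s' m q al be = s m q al be.
Proof.
move=> char0 s0 Ws s'0 Ws'.
suff H : forall n m q al be, (al + be < n)%N -> s' m q al be = s m q al be.
  by move=> m q al be; apply: (H (al + be).+1).
elim=> // n IH m q al be; rewrite ltnS leq_eqVlt => /orP[/eqP deg | ]; last exact: IH.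
case: (boolP (m == 0%N)) => [/eqP -> | m_nz]; first by rewrite s0 s'0.
have lower_eq : forall a b,
    monact (drop_top s' al be) al be a b = monact (drop_top s al be) al be a b.
  move=> a b; apply: monact_drop_top_agree => [m' q' x y _ _ lt | q'].
    by apply: IH; rewrite -deg.
  by rewrite s0 s'0.
have monact_eq : monact s' al be = monact s al be.
  apply: (W_eq_of_agree W_closed W_supp (Ws' al be) (Ws al be)) => a b hb.
  by rewrite monact_drop_top [RHS]monact_drop_top lower_eq ltNge hb.
have := congr1 (fun f => f q m%:Z) monact_eq.
rewrite /= monact_drop_top [RHS]monact_drop_top lower_eq ltz_nat lt0n m_nz.
by move/addrI/mulfI; apply; apply: fact_prod_neq0.
Qed.

End Characterization.

Theorem theorem1 (k : fieldType) (char0 : [pchar k] =i pred0)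
  (W : (nat -> int -> k) -> Prop) :
  closed_subspace W -> supp_is_W0 W ->
  exists s : nat -> nat -> nat -> nat -> k,
    isS s /\ (forall f, inW0S s f <-> W f) /\
    (forall s' : nat -> nat -> nat -> nat -> k,
       isS s' -> (forall f, inW0S s' f <-> W f) ->
       forall m q i j, s' m q i j = s m q i j).
Proof.
move=> W_closed W_supp.
have [cw cw_spec] := completion_exists W_closed W_supp.
have S_isS := limS_isS W_closed cw_spec.
have [S_one _] := S_isS.
have W_monact := limS_monact_W char0 W_closed cw_spec.
exists (limS cw); split; first exact: S_isS.
split; first exact: (W0S_eq_W (s := limS cw) W_closed W_supp S_one W_monact).
move=> s' [s'_one _] W0S'_eq_W.
apply: (S_unique (s := limS cw) W_closed W_supp char0 S_one W_monact s'_one) => i j.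
exact/W0S'_eq_W/monact_inW0S.
Qed.
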